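(* Let $n$ be a nonnegative integer and let $x$ be a complex number such that no denominator below vanishes. Then \[ \sum_{k=0}^{n}(-1)^k\binom{n}{k} \frac{\binom{\frac{x}{2}+k}{k}\binom{x-\frac{1}{2}+k}{k}}{\binom{\frac{x-1}{2}+k}{k}\binom{x-\frac{1}{2}+n+k}{k}}H_{2k}(x) =4^{n-1}\frac{\binom{\frac{x}{2}-\frac{1}{4}+n}{n}\binom{-\frac{3}{4}+n}{n}}{\binom{\frac{x-1}{2}+n}{n}\binom{x-\frac{1}{2}+2n}{n}} \big\{H_n(\tfrac{x-1}{2})-H_n(-\tfrac{3}{4})\big\} +4^{n-1}\frac{\binom{\frac{x}{2}-\frac{3}{4}+n}{n}\binom{-\frac{5}{4}+n}{n}}{\binom{\frac{x-1}{2}+n}{n}\binom{x-\frac{1}{2}+2n}{n}} \big\{H_n(\tfrac{x-1}{2})-H_n(-\tfrac{5}{4})\big\}. \]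
   Context: For complex $z$ and a nonnegative integer $k$, $\binom{z}{k}=\frac{z(z-1)\cdots(z-k+1)}{k!}$ (with $\binom{z}{0}=1$). For complex $x$ and nonnegative integer $m$, $H_0(x)=0$ and $H_m(x)=\sum_{j=1}^m\frac{1}{x+j}$ for $m\ge1$. The parameter $x$ is assumed to be such that all denominators are nonzero. *)

From mathcomp Require Import all_boot all_order all_algebra.
From mathcomp Require Import complex.
From mathcomp Require Import reals.
Set Implicit Arguments. Unset Strict Implicit. Unset Printing Implicit Defensive.
Import Order.TTheory GRing.Theory Num.Theory.
Local Open Scope ring_scope.

Definition gbinom {F : fieldType} (z : F) (k : nat) : F :=
  (\prod_(i < k) (z - i%:R)) / (k`!)%:R.

Definition harm {F : fieldType} (m : nat) (x : F) : F :=
  \sum_(1 <= j < m.+1) (x + j%:R)^-1.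

From mathcomp Require Import all_boot all_order all_algebra.
From mathcomp Require Import complex reals.
From mathcomp Require Import ring.
Import GRing.Theory Num.Theory.
Local Open Scope ring_scope.

(* Put a = x + 1/2 and c = a/2 + 3/4.  Since H_{2k}(x) is half of
   h_k = sum_(i < k) (1/(c+i) + 1/(1+a-c+i)), the left-hand side is a
   combination of  sum_k t(n,k) h_k  and  sum_k (a+2k)/a t(n,k) h_k, where
   t(n,k) = (a)_k (-n)_k (c)_k / (k! (1+a+n)_k (1+a-c)_k) is the term of
   Dixon's well-poised 3F2 and (a+2k)/a turns it into Dougall's
   very-well-poised series.  As h_k is the c-derivative of
   log((c)_k / (1+a-c)_k), these sums are the c-derivatives of the Dixon
   and Dougall sums.  For arbitrary a and c, creative telescoping gives
   first-order recurrences in n for all four sums, with rational certificates;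
   solving them yields products of Pochhammer symbols,
   and Legendre's duplication formula brings these to the stated form.
   The identity so obtained holds over any field of characteristic 0 in which
   2x is not a negative integer, in particular for the indeterminate of C(X);
   evaluating both sides at the given x, where no denominator vanishes,
   proves the theorem. *)

Section Pochhammer.
Context {R : comNzRingType}.
Implicit Types (z : R) (k m n : nat).

Definition poch z k := \prod_(i < k) (z + i%:R).

Lemma poch0 z : poch z 0 = 1.
Proof. by rewrite /poch big_ord0. Qed.

Lemma pochS z k : poch z k.+1 = poch z k * (z + k%:R).
Proof. by rewrite /poch big_ord_recr. Qed.

Lemma pochSl z k : poch z k.+1 = z * poch (z + 1) k.
Proof.
rewrite /poch big_ord_recl addr0; congr (_ * _).
by apply: eq_bigr => i _; rewrite lift0 -natr1; ring.
Qed.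

Lemma poch_add z m n : poch z (m + n) = poch z m * poch (z + m%:R) n.
Proof.
rewrite /poch big_split_ord /=; congr (_ * _).
by apply: eq_bigr => i _; rewrite natrD addrA.
Qed.

Lemma poch_oppn n k : poch (- n%:R) k = (-1) ^+ k * (n ^_ k)%:R.
Proof.
elim: k => [|k IH]; first by rewrite poch0 expr0 ffactn0 mul1r.
rewrite pochS IH ffactnSr exprS natrM.
have [le_kn | lt_nk] := leqP k n; first by rewrite natrB //; ring.
by rewrite ffact_small // !(mulr0, mul0r).
Qed.

End Pochhammer.

Section PochhammerField.
Context {F : fieldType}.
Implicit Types (z : F) (k n : nat).

Lemma poch_neq0 z k : (forall i, (i < k)%N -> z + i%:R != 0) -> poch z k != 0.
Proof. by move=> nz; apply/prodf_neq0 => i _; apply: nz. Qed.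

Lemma gbinom_poch z k : gbinom (z + k%:R) k = poch (z + 1) k / (k`!)%:R.
Proof.
rewrite /gbinom /poch (reindex_inj rev_ord_inj) /=; congr (_ / _).
apply: eq_bigr => i _; rewrite natrB //; ring.
Qed.

Lemma signed_binomial n k : (k`!)%:R != 0 :> F ->
  (-1) ^+ k * ('C(n, k))%:R = poch (- n%:R : F) k / (k`!)%:R.
Proof.
by move=> fact_neq0; rewrite poch_oppn -bin_ffact natrM mulrA mulfK.
Qed.

Lemma poch_double z n : 2%:R != 0 :> F ->
  poch z (2 * n) = 4%:R ^+ n * poch (z / 2%:R) n * poch ((z + 1) / 2%:R) n.
Proof.
move=> two_neq0; elim: n => [|n IH]; first by rewrite !poch0 expr0 !mulr1.
by rewrite mulnS !pochS IH exprS; field.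
Qed.

Lemma poch_double_split z n : 2%:R != 0 :> F ->
  poch z n * poch (z + n%:R) n = 4%:R ^+ n * poch (z / 2%:R) n * poch ((z + 1) / 2%:R) n.
Proof. by move=> two_neq0; rewrite -poch_add addnn -mul2n poch_double. Qed.

Lemma poch_shift z k : z != 0 -> poch (z + 1) k = poch z k * (z + k%:R) / z.
Proof. by move=> z_neq0; rewrite -pochS pochSl; field. Qed.

End PochhammerField.

Lemma creative_telescoping {V : zmodType} {n} {f g : nat -> V} (G : nat -> V) :
  f n.+1 = 0 -> G 0%N = 0 -> G n.+2 = 0 ->
  (forall k, (k < n.+2)%N -> g k - f k = G k.+1 - G k) ->
  \sum_(0 <= k < n.+2) g k = \sum_(0 <= k < n.+1) f k.
Proof.
move=> fn0 G0 Gn dG.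
have -> : \sum_(0 <= k < n.+1) f k = \sum_(0 <= k < n.+2) f k.
  by rewrite [RHS]big_nat_recr //= fn0 addr0.
apply/eqP; rewrite -subr_eq0 -sumrB (telescope_sumr_eq G) ?G0 ?Gn ?subrr //.
Qed.

Lemma recurrence_uniq {F : fieldType} {r b u v : nat -> F} :
  (forall n, r n != 0) ->
  (forall n, u n = r n * u n.+1 + b n) -> (forall n, v n = r n * v n.+1 + b n) ->
  u 0%N = v 0%N -> u =1 v.
Proof.
move=> r_neq0 eu ev e0; elim=> [//|n IH].
by apply: (mulfI (r_neq0 n)); apply: (addIr (b n)); rewrite -eu -ev.
Qed.

(* Closes side conditions [z != 0], e.g. those left by [field], with a
   hypothesis [y != 0] such that [z = y] by [ring]. *)
Ltac neq0_by_context :=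
  repeat (apply/andP; split); rewrite ?oppr_eq0;
  first [ done
        | match goal with H : is_true (~~ (?y == _)) |- is_true (~~ (?z == _)) =>
            rewrite (_ : z = y); [exact: H | ring]
          end ].

Section DixonCertificates.
Context {F : fieldType}.
Variables a c N K t h : F.
Local Notation e := (1 + a - c).
Local Notation A := (2%:R + a - 2%:R * c + 2%:R * N).
Local Notation B := (1 + a - 2%:R * c + 2%:R * N).

(* [A] and [B] are twice 1 + a/2 - c + N and (1+a)/2 - c + N.  The [_dc]
   variants are the derivatives in [c] (with [e] depending on [c]); they
   certify the harmonic sums, since the [c]-derivative of the term
   (c)_K/(e)_K is that term times sum_(i < K) (1/(c+i) + 1/(e+i)). *)
Definition dixon_ratio := (2%:R + a + 2%:R * N) * (e + N) / ((1 + a + N) * A).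
Definition dixon_ratio_dc := (2%:R + a + 2%:R * N) * a / ((1 + a + N) * A ^+ 2).
Definition dixon_cert k := - k * (e - 1 + k) * (1 + a + N + k) / ((N + 1) * (1 + a + N) * A).
Definition dixon_cert_dc k :=
  - k * (1 + a + N + k) * (a + 2%:R * k - 2%:R * N - 2%:R) / ((N + 1) * (1 + a + N) * A ^+ 2).

Definition dougall_ratio := (1 + a + 2%:R * N) * (e + N) / ((1 + a + N) * B).
Definition dougall_ratio_dc := (1 + a + 2%:R * N) * (1 + a) / ((1 + a + N) * B ^+ 2).
Definition dougall_cert k :=
  - k * (e - 1 + k) * (1 + a + N + k) * (a + 2%:R * k - 1) / (a * (N + 1) * (1 + a + N) * B).
Definition dougall_cert_dc k :=
  - k * (1 + a + N + k) * (a + 2%:R * k - 1) * (a + 2%:R * k - 2%:R * N - 1)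
  / (a * (N + 1) * (1 + a + N) * B ^+ 2).

(* [t] stands for t(N+1,K); [t_pred_n] and [t_succ_k] are t(N,K) and t(N+1,K+1). *)
Local Notation t_pred_n := (t * (N + 1 - K) * (1 + a + N + K) / ((N + 1) * (1 + a + N))).
Local Notation t_succ_k :=
  (t * (a + K) * (K - N - 1) * (c + K) / ((K + 1) * (2%:R + a + N + K) * (e + K))).
Local Notation h_succ_k := (h + (c + K)^-1 + (e + K)^-1).
Local Notation w := ((a + 2%:R * K) / a).

Hypothesis N1_neq0 : N + 1 != 0.
Hypothesis K1_neq0 : K + 1 != 0.
Hypothesis aN_neq0 : 1 + a + N != 0.
Hypothesis aNK_neq0 : 2%:R + a + N + K != 0.
Hypothesis cK_neq0 : c + K != 0.
Hypothesis eK_neq0 : e + K != 0.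
Hypothesis A_neq0 : A != 0.
Hypothesis B_neq0 : B != 0.
Hypothesis a_neq0 : a != 0.

Lemma dixon_certificate :
  dixon_ratio * t - t_pred_n = t_succ_k * dixon_cert (K + 1) - t * dixon_cert K.
Proof. by rewrite /dixon_ratio /dixon_cert; field; neq0_by_context. Qed.

Lemma dixon_harm_certificate :
  dixon_ratio * t * h - t_pred_n * h + dixon_ratio_dc * t
  = t_succ_k * (dixon_cert (K + 1) * h_succ_k + dixon_cert_dc (K + 1))
    - t * (dixon_cert K * h + dixon_cert_dc K).
Proof.
by rewrite /dixon_ratio /dixon_ratio_dc /dixon_cert /dixon_cert_dc; field; neq0_by_context.
Qed.

Lemma dougall_certificate :
  dougall_ratio * (w * t) - w * t_pred_n = t_succ_k * dougall_cert (K + 1) - t * dougall_cert K.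
Proof. by rewrite /dougall_ratio /dougall_cert; field; neq0_by_context. Qed.

Lemma dougall_harm_certificate :
  dougall_ratio * (w * t) * h - w * t_pred_n * h + dougall_ratio_dc * (w * t)
  = t_succ_k * (dougall_cert (K + 1) * h_succ_k + dougall_cert_dc (K + 1))
    - t * (dougall_cert K * h + dougall_cert_dc K).
Proof.
by rewrite /dougall_ratio /dougall_ratio_dc /dougall_cert /dougall_cert_dc; field; neq0_by_context.
Qed.

End DixonCertificates.

Section Dixon.
Context {F : fieldType}.
Variables a c : F.
Local Notation e := (1 + a - c).
Hypothesis natr_neq0 : forall m, m.+1%:R != 0 :> F.
Hypothesis a_natr_neq0 : forall m, a + m%:R != 0.
Hypothesis c_natr_neq0 : forall m, c + m%:R != 0.
Hypothesis e_natr_neq0 : forall m, e + m%:R != 0.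
Hypothesis dixon_natr_neq0 : forall m, 1 + a / 2%:R - c + m%:R != 0.
Hypothesis dougall_natr_neq0 : forall m, (1 + a) / 2%:R - c + m%:R != 0.

Definition dixon_term n k :=
  poch a k * poch (- n%:R) k * poch c k / ((k`!)%:R * poch (1 + a + n%:R) k * poch e k).

Lemma fact_neq0 k : (k`!)%:R != 0 :> F.
Proof. by rewrite -(prednK (fact_gt0 k)). Qed.

Lemma natr_add1_neq0 m : m%:R + 1 != 0 :> F.
Proof. by rewrite natr1. Qed.

Lemma aN_neq0 m : 1 + a + m%:R != 0.
Proof. by rewrite (addrC 1) -addrA nat1r. Qed.

Lemma a_neq0 : a != 0.
Proof. by have := a_natr_neq0 0; rewrite addr0. Qed.

Lemma aNK_neq0 n k : 2%:R + a + n%:R + k%:R != 0.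
Proof. by rewrite -addrA -natrD (addrC 2%:R) -addrA -natrD a_natr_neq0. Qed.

Lemma poch_aN_neq0 m k : poch (1 + a + m%:R) k != 0.
Proof. by apply: poch_neq0 => i _; rewrite -addrA -natrD aN_neq0. Qed.

Lemma poch_e_neq0 k : poch e k != 0.
Proof. by apply: poch_neq0 => i _; apply: e_natr_neq0. Qed.

Lemma dixon_term0 n : dixon_term n 0 = 1.
Proof. by rewrite /dixon_term !poch0 !mulr1 divr1. Qed.

Lemma dixon_term_vanish n : dixon_term n n.+1 = 0.
Proof. by rewrite /dixon_term poch_oppn ffact_small // mulr0 mulr0 !mul0r. Qed.

Lemma dixon_term_pred_n n k :
  dixon_term n k = dixon_term n.+1 k * (n%:R + 1 - k%:R) * (1 + a + n%:R + k%:R)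
                   / ((n%:R + 1) * (1 + a + n%:R)).
Proof.
have := fact_neq0 k; have := poch_aN_neq0 n k; have := poch_e_neq0 k.
have := natr_neq0 n; have := aN_neq0 n; have := aN_neq0 (n + k) => ? ? ? ? ? ?.
rewrite /dixon_term (_ : 1 + a + n.+1%:R = 1 + a + n%:R + 1); last by rewrite -natr1 addrA.
rewrite poch_shift // (_ : - n%:R = - n.+1%:R + 1); last by rewrite -natr1 opprD addrNK.
by rewrite poch_shift ?oppr_eq0 //; field; neq0_by_context.
Qed.

Lemma dixon_term_succ_k n k :
  dixon_term n.+1 k.+1 = dixon_term n.+1 k * (a + k%:R) * (k%:R - n%:R - 1) * (c + k%:R)
                         / ((k%:R + 1) * (2%:R + a + n%:R + k%:R) * (e + k%:R)).
Proof.
have := fact_neq0 k; have := poch_aN_neq0 n.+1 k; have := poch_e_neq0 k.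
have := natr_add1_neq0 k; have := aNK_neq0 n k; have := e_natr_neq0 k => ? ? ? ? ? ?.
by rewrite /dixon_term !pochS factS natrM; field; neq0_by_context.
Qed.

Lemma dixon_A_neq0 m : 2%:R + a - 2%:R * c + 2%:R * m%:R != 0.
Proof.
have two_neq0 := natr_neq0 1.
have -> : 2%:R + a - 2%:R * c + 2%:R * m%:R = 2%:R * (1 + a / 2%:R - c + m%:R) by field.
by rewrite mulf_neq0.
Qed.

Lemma dougall_B_neq0 m : 1 + a - 2%:R * c + 2%:R * m%:R != 0.
Proof.
have two_neq0 := natr_neq0 1.
have -> : 1 + a - 2%:R * c + 2%:R * m%:R = 2%:R * ((1 + a) / 2%:R - c + m%:R) by field.
by rewrite mulf_neq0.
Qed.

Local Ltac shift_neq0 :=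
  first [ exact: natr_add1_neq0 | exact: aN_neq0 | exact: aNK_neq0 | exact: a_neq0
        | exact: c_natr_neq0 | exact: e_natr_neq0 | exact: dixon_A_neq0 | exact: dougall_B_neq0 ].

Definition dixon_harm k := \sum_(i < k) ((c + i%:R)^-1 + (e + i%:R)^-1).

Lemma dixon_harmS k : dixon_harm k.+1 = dixon_harm k + (c + k%:R)^-1 + (e + k%:R)^-1.
Proof. by rewrite /dixon_harm big_ord_recr /= addrA. Qed.

Lemma dixon_sum_rec n :
  \sum_(0 <= k < n.+1) dixon_term n k
  = dixon_ratio a c n%:R * \sum_(0 <= k < n.+2) dixon_term n.+1 k.
Proof.
rewrite big_distrr /=; symmetry.
apply: (creative_telescoping (fun k => dixon_term n.+1 k * dixon_cert a c n%:R k%:R)).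
- exact: dixon_term_vanish.
- by rewrite /dixon_cert oppr0 !mul0r mulr0.
- by rewrite dixon_term_vanish mul0r.
move=> k _; rewrite (dixon_term_pred_n n k) (dixon_term_succ_k n k) -[k.+1%:R]natr1.
by apply: dixon_certificate; shift_neq0.
Qed.

Lemma dixon_harm_sum_rec n :
  \sum_(0 <= k < n.+1) dixon_term n k * dixon_harm k
  = dixon_ratio a c n%:R * \sum_(0 <= k < n.+2) dixon_term n.+1 k * dixon_harm k
    + dixon_ratio_dc a c n%:R * \sum_(0 <= k < n.+2) dixon_term n.+1 k.
Proof.
rewrite !big_distrr -big_split /=; symmetry.
apply: (creative_telescoping (fun k => dixon_term n.+1 k
          * (dixon_cert a c n%:R k%:R * dixon_harm k + dixon_cert_dc a c n%:R k%:R))).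
- by rewrite dixon_term_vanish mul0r.
- by rewrite /dixon_cert /dixon_cert_dc oppr0 !mul0r add0r mulr0.
- by rewrite dixon_term_vanish mul0r.
move=> k _; rewrite (dixon_term_pred_n n k) (dixon_term_succ_k n k) dixon_harmS -[k.+1%:R]natr1.
rewrite -dixon_harm_certificate; try shift_neq0.
by rewrite !mulrA addrAC.
Qed.

Lemma dougall_sum_rec n :
  \sum_(0 <= k < n.+1) (a + 2%:R * k%:R) / a * dixon_term n k
  = dougall_ratio a c n%:R * \sum_(0 <= k < n.+2) (a + 2%:R * k%:R) / a * dixon_term n.+1 k.
Proof.
rewrite big_distrr /=; symmetry.
apply: (creative_telescoping (fun k => dixon_term n.+1 k * dougall_cert a c n%:R k%:R)).
- by rewrite dixon_term_vanish mulr0.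
- by rewrite /dougall_cert oppr0 !mul0r mulr0.
- by rewrite dixon_term_vanish mul0r.
move=> k _; rewrite (dixon_term_pred_n n k) (dixon_term_succ_k n k) -[k.+1%:R]natr1.
rewrite -dougall_certificate; try shift_neq0.
by rewrite !mulrA.
Qed.

Lemma dougall_harm_sum_rec n :
  \sum_(0 <= k < n.+1) (a + 2%:R * k%:R) / a * dixon_term n k * dixon_harm k
  = dougall_ratio a c n%:R
      * \sum_(0 <= k < n.+2) (a + 2%:R * k%:R) / a * dixon_term n.+1 k * dixon_harm k
    + dougall_ratio_dc a c n%:R * \sum_(0 <= k < n.+2) (a + 2%:R * k%:R) / a * dixon_term n.+1 k.
Proof.
rewrite !big_distrr -big_split /=; symmetry.
apply: (creative_telescoping (fun k => dixon_term n.+1 k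
          * (dougall_cert a c n%:R k%:R * dixon_harm k + dougall_cert_dc a c n%:R k%:R))).
- by rewrite dixon_term_vanish mulr0 mul0r.
- by rewrite /dougall_cert /dougall_cert_dc oppr0 !mul0r add0r mulr0.
- by rewrite dixon_term_vanish mul0r.
move=> k _; rewrite (dixon_term_pred_n n k) (dixon_term_succ_k n k) dixon_harmS -[k.+1%:R]natr1.
rewrite -dougall_harm_certificate; try shift_neq0.
by rewrite !mulrA addrAC.
Qed.

Definition dixon_value n :=
  poch (1 + a) n * poch (1 + a / 2%:R - c) n / (poch (1 + a / 2%:R) n * poch e n).
Definition dixon_harm_value n :=
  \sum_(i < n) ((e + i%:R)^-1 - (1 + a / 2%:R - c + i%:R)^-1).
Definition dougall_value n :=
  poch (1 + a) n * poch ((1 + a) / 2%:R - c) n / (poch e n * poch ((1 + a) / 2%:R) n).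
Definition dougall_harm_value n :=
  \sum_(i < n) ((e + i%:R)^-1 - ((1 + a) / 2%:R - c + i%:R)^-1).

Lemma poch_half_a_neq0 k : poch (1 + a / 2%:R) k != 0.
Proof.
apply: poch_neq0 => i _; have two_neq0 := natr_neq0 1.
have -> : 1 + a / 2%:R + i%:R = (a + (2 * i + 2)%N%:R) / 2%:R by rewrite natrD natrM; field.
by rewrite mulf_neq0 ?invr_eq0.
Qed.

Lemma poch_half_a1_neq0 k : poch ((1 + a) / 2%:R) k != 0.
Proof.
apply: poch_neq0 => i _; have two_neq0 := natr_neq0 1.
have -> : (1 + a) / 2%:R + i%:R = (a + (2 * i + 1)%N%:R) / 2%:R by rewrite natrD natrM; field.
by rewrite mulf_neq0 ?invr_eq0.
Qed.

Lemma dixon_ratio_neq0 n : dixon_ratio a c n%:R != 0.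
Proof.
have := a_natr_neq0 (2 * n + 2); have := aN_neq0 n; have := dixon_A_neq0 n.
have := e_natr_neq0 n => ? ? ? ?.
by rewrite /dixon_ratio !(mulf_neq0, invr_eq0) //; neq0_by_context.
Qed.

Lemma dougall_ratio_neq0 n : dougall_ratio a c n%:R != 0.
Proof.
have := a_natr_neq0 (2 * n + 1); have := aN_neq0 n; have := dougall_B_neq0 n.
have := e_natr_neq0 n => ? ? ? ?.
by rewrite /dougall_ratio !(mulf_neq0, invr_eq0) //; neq0_by_context.
Qed.

Lemma dixon_value_rec n : dixon_value n = dixon_ratio a c n%:R * dixon_value n.+1.
Proof.
have := natr_neq0 1; have := e_natr_neq0 n; have := poch_e_neq0 n.
have := a_natr_neq0 (2 * n + 2); have := poch_half_a_neq0 n; have := dixon_A_neq0 n.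
have := aN_neq0 n => ? ? ? ? ? ? ?.
by rewrite /dixon_value /dixon_ratio !pochS; field; neq0_by_context.
Qed.

Lemma dougall_value_rec n : dougall_value n = dougall_ratio a c n%:R * dougall_value n.+1.
Proof.
have := natr_neq0 1; have := e_natr_neq0 n; have := poch_e_neq0 n.
have := a_natr_neq0 (2 * n + 1); have := poch_half_a1_neq0 n; have := dougall_B_neq0 n.
have := aN_neq0 n => ? ? ? ? ? ? ?.
by rewrite /dougall_value /dougall_ratio !pochS; field; neq0_by_context.
Qed.

Lemma dixon_harm_value_rec n :
  dixon_value n * dixon_harm_value n
  = dixon_ratio a c n%:R * (dixon_value n.+1 * dixon_harm_value n.+1)
    + dixon_ratio_dc a c n%:R * dixon_value n.+1.
Proof.
have := natr_neq0 1; have := e_natr_neq0 n; have := dixon_natr_neq0 n.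
have := dixon_A_neq0 n; have := aN_neq0 n => ? ? ? ? ?.
rewrite dixon_value_rec /dixon_harm_value big_ord_recr /= /dixon_ratio /dixon_ratio_dc.
by field; neq0_by_context.
Qed.

Lemma dougall_harm_value_rec n :
  dougall_value n * dougall_harm_value n
  = dougall_ratio a c n%:R * (dougall_value n.+1 * dougall_harm_value n.+1)
    + dougall_ratio_dc a c n%:R * dougall_value n.+1.
Proof.
have := natr_neq0 1; have := e_natr_neq0 n; have := dougall_natr_neq0 n.
have := dougall_B_neq0 n; have := aN_neq0 n => ? ? ? ? ?.
rewrite dougall_value_rec /dougall_harm_value big_ord_recr /= /dougall_ratio /dougall_ratio_dc.
by field; neq0_by_context.
Qed.

Theorem dixon_sum n : \sum_(0 <= k < n.+1) dixon_term n k = dixon_value n.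
Proof.
move: n; apply: (recurrence_uniq (b := fun=> 0) dixon_ratio_neq0) => [n|n|].
- by rewrite addr0 dixon_sum_rec.
- by rewrite addr0 dixon_value_rec.
by rewrite big_nat1 dixon_term0 /dixon_value !poch0 mulr1 divr1.
Qed.

(* (a+2k)/a = (1+a/2)_k/(a/2)_k makes the series very-well-poised: this is
   Dougall's 5F4 summation with the extra parameter pair (1+a)/2 cancelling. *)
Theorem dougall_sum n :
  \sum_(0 <= k < n.+1) (a + 2%:R * k%:R) / a * dixon_term n k = dougall_value n.
Proof.
move: n; apply: (recurrence_uniq (b := fun=> 0) dougall_ratio_neq0) => [n|n|].
- by rewrite addr0 dougall_sum_rec.
- by rewrite addr0 dougall_value_rec.
by rewrite big_nat1 dixon_term0 /dougall_value !poch0 mulr1 divr1 mulr0 addr0 divff ?mulr1 ?a_neq0.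
Qed.

Theorem dixon_harm_sum n :
  \sum_(0 <= k < n.+1) dixon_term n k * dixon_harm k = dixon_value n * dixon_harm_value n.
Proof.
move: n; apply: (recurrence_uniq
  (b := fun n => dixon_ratio_dc a c n%:R * dixon_value n.+1) dixon_ratio_neq0) => [n|n|].
- by rewrite dixon_harm_sum_rec dixon_sum.
- exact: dixon_harm_value_rec.
by rewrite big_nat1 /dixon_harm /dixon_harm_value !big_ord0 !mulr0.
Qed.

Theorem dougall_harm_sum n :
  \sum_(0 <= k < n.+1) (a + 2%:R * k%:R) / a * dixon_term n k * dixon_harm k
  = dougall_value n * dougall_harm_value n.
Proof.
move: n; apply: (recurrence_uniq
  (b := fun n => dougall_ratio_dc a c n%:R * dougall_value n.+1) dougall_ratio_neq0) => [n|n|].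
- by rewrite dougall_harm_sum_rec dougall_sum.
- exact: dougall_harm_value_rec.
by rewrite big_nat1 /dixon_harm /dougall_harm_value !big_ord0 !mulr0.
Qed.

End Dixon.

Section Harmonic.
Context {F : fieldType}.
Implicit Types (y : F) (k n : nat).

Lemma harm_ord n y : harm n y = \sum_(i < n) (y + i.+1%:R)^-1.
Proof. by rewrite /harm big_add1 big_mkord. Qed.

Lemma harm_double k y :
  harm (2 * k) y = \sum_(i < k) ((y + (2 * i).+2%:R)^-1 + (y + (2 * i).+1%:R)^-1).
Proof.
elim: k => [|k IH]; first by rewrite /harm big_geq // big_ord0.
rewrite big_ord_recr /= -IH /harm mulnS add2n big_nat_recr // big_nat_recr //=.
by rewrite addrAC -addrA.
Qed.

End Harmonic.

Definition theorem4_lhs {F : fieldType} (n : nat) (x : F) : F :=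
  \sum_(0 <= k < n.+1)
     (-1) ^+ k * ('C(n, k))%:R
     * (gbinom (x / 2%:R + k%:R) k * gbinom (x - 1 / 2%:R + k%:R) k)
     / (gbinom ((x - 1) / 2%:R + k%:R) k * gbinom (x - 1 / 2%:R + n%:R + k%:R) k)
     * harm (2 * k) x.

Definition theorem4_rhs {F : fieldType} (n : nat) (x : F) : F :=
  4%:R ^ (n%:Z - 1)
     * (gbinom (x / 2%:R - 1 / 4%:R + n%:R) n * gbinom (- (3%:R / 4%:R) + n%:R) n)
     / (gbinom ((x - 1) / 2%:R + n%:R) n * gbinom (x - 1 / 2%:R + (2 * n)%:R) n)
     * (harm n ((x - 1) / 2%:R) - harm n (- (3%:R / 4%:R)))
  + 4%:R ^ (n%:Z - 1)
     * (gbinom (x / 2%:R - 3%:R / 4%:R + n%:R) n * gbinom (- (5%:R / 4%:R) + n%:R) n)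
     / (gbinom ((x - 1) / 2%:R + n%:R) n * gbinom (x - 1 / 2%:R + (2 * n)%:R) n)
     * (harm n ((x - 1) / 2%:R) - harm n (- (5%:R / 4%:R))).

Section Theorem4.
Context {F : fieldType}.
Variable a : F.
Hypothesis natr_neq0 : forall m, m.+1%:R != 0 :> F.
Hypothesis twice_a_natr_neq0 : forall m, 2%:R * a + m%:R != 0.
Local Notation x := (a - 1 / 2%:R).
Local Notation c := (a / 2%:R + 3%:R / 4%:R).
Local Notation e := (1 + a - c).

Let two_neq0 : 2%:R != 0 :> F. Proof. exact: natr_neq0. Qed.
Let four_neq0 : 4%:R != 0 :> F. Proof. exact: natr_neq0. Qed.

Lemma twice_a_natr_factor_neq0 (r y : F) m : r * y = 2%:R * a + m%:R -> y != 0.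
Proof. by move=> E; have := twice_a_natr_neq0 m; rewrite -E mulf_eq0 negb_or => /andP[]. Qed.

Lemma a_natr_neq0 m : a + m%:R != 0.
Proof.
by apply: (twice_a_natr_factor_neq0 2%:R _ (2 * m)); rewrite natrM; field; neq0_by_context.
Qed.

Lemma c_natr_neq0 m : c + m%:R != 0.
Proof.
apply: (twice_a_natr_factor_neq0 4%:R _ (4 * m + 3)).
by rewrite natrD natrM; field; neq0_by_context.
Qed.

Lemma e_natr_neq0 m : e + m%:R != 0.
Proof.
apply: (twice_a_natr_factor_neq0 4%:R _ (4 * m + 1)).
by rewrite natrD natrM; field; neq0_by_context.
Qed.

Lemma dixon_natr_neq0 m : 1 + a / 2%:R - c + m%:R != 0.
Proof.
have -> : 1 + a / 2%:R - c + m%:R = (4 * m).+1%:R / 4%:R.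
  by rewrite -[(4 * m).+1%:R]natr1 natrM; field; neq0_by_context.
by rewrite mulf_neq0 ?invr_eq0.
Qed.

Lemma dougall_natr_neq0 m : (1 + a) / 2%:R - c + m%:R != 0.
Proof.
case: m => [|m].
  have -> : (1 + a) / 2%:R - c + 0%:R = - 4%:R^-1 by field; neq0_by_context.
  by rewrite oppr_eq0 invr_eq0.
have -> : (1 + a) / 2%:R - c + m.+1%:R = (4 * m + 2).+1%:R / 4%:R.
  by rewrite -[m.+1%:R]natr1 -[(4 * m + 2).+1%:R]natr1 natrD natrM; field; neq0_by_context.
by rewrite mulf_neq0 ?invr_eq0.
Qed.

Local Ltac dixon_hypotheses :=
  first [ exact: natr_neq0 | exact: a_natr_neq0 | exact: c_natr_neq0 | exact: e_natr_neq0
        | exact: dixon_natr_neq0 | exact: dougall_natr_neq0 ].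

Lemma poch_an_neq0 n k : poch (a + n%:R) k != 0.
Proof. by apply: poch_neq0 => i _; rewrite -addrA -natrD a_natr_neq0. Qed.

Lemma harm_double_dixon k : harm (2 * k) x = dixon_harm a c k / 2%:R.
Proof.
rewrite harm_double /dixon_harm mulr_suml; apply: eq_bigr => i _.
by rewrite mulrDl -!invfM; congr (_^-1 + _^-1); field; neq0_by_context.
Qed.


(* The summand is t(n,k) (a+n+k)/(a+n) h_k / 2, and
   (a+n+k)/(a+n) = ((a+2n) + (a+2k)) / (2(a+n)). *)
Lemma theorem4_summand n k :
  (-1) ^+ k * ('C(n, k))%:R
     * (gbinom (x / 2%:R + k%:R) k * gbinom (x - 1 / 2%:R + k%:R) k)
     / (gbinom ((x - 1) / 2%:R + k%:R) k * gbinom (x - 1 / 2%:R + n%:R + k%:R) k)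
     * harm (2 * k) x
  = ((a + 2%:R * n%:R) * (dixon_term a c n k * dixon_harm a c k)
     + a * ((a + 2%:R * k%:R) / a * dixon_term a c n k * dixon_harm a c k))
    / (4%:R * (a + n%:R)).
Proof.
have := fact_neq0 natr_neq0 k; have := poch_e_neq0 a c e_natr_neq0 k.
have := poch_an_neq0 n k.
have := a_natr_neq0 n; have := a_natr_neq0 (n + k); have := a_neq0 a a_natr_neq0.
move=> ? ? ? ? ? ?.
rewrite signed_binomial // !gbinom_poch harm_double_dixon.
rewrite (_ : x / 2%:R + 1 = c); last by field; neq0_by_context.
rewrite (_ : x - 1 / 2%:R + 1 = a); last by field; neq0_by_context.
rewrite (_ : (x - 1) / 2%:R + 1 = e); last by field; neq0_by_context.
rewrite (_ : x - 1 / 2%:R + n%:R + 1 = a + n%:R); last by field; neq0_by_context.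
rewrite /dixon_term (_ : 1 + a + n%:R = a + n%:R + 1); last by ring.
by rewrite poch_shift //; field; neq0_by_context.
Qed.

Lemma theorem4_lhs_closed n :
  theorem4_lhs n x
  = ((a + 2%:R * n%:R) * (dixon_value a c n * dixon_harm_value a c n)
     + a * (dougall_value a c n * dougall_harm_value a c n)) / (4%:R * (a + n%:R)).
Proof.
rewrite /theorem4_lhs (eq_bigr _ (fun k _ => theorem4_summand n k)) -mulr_suml big_split /=.
by rewrite -!mulr_sumr (dixon_harm_sum a c) ?(dougall_harm_sum a c) //; dixon_hypotheses.
Qed.

Lemma harm_sub_dixon n :
  harm n ((x - 1) / 2%:R) - harm n (- (3%:R / 4%:R)) = dixon_harm_value a c n.
Proof.
rewrite !harm_ord /dixon_harm_value -sumrB; apply: eq_bigr => i _.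
by congr (_^-1 - _^-1); field; neq0_by_context.
Qed.

Lemma harm_sub_dougall n :
  harm n ((x - 1) / 2%:R) - harm n (- (5%:R / 4%:R)) = dougall_harm_value a c n.
Proof.
rewrite !harm_ord /dougall_harm_value -sumrB; apply: eq_bigr => i _.
by congr (_^-1 - _^-1); field; neq0_by_context.
Qed.

Lemma theorem4_rhs_closed n :
  theorem4_rhs n x
  = 4%:R ^+ n / 4%:R * (poch ((1 + a) / 2%:R) n * poch (1 / 4%:R) n)
      / (poch e n * poch (a + n%:R) n) * dixon_harm_value a c n
    + 4%:R ^+ n / 4%:R * (poch (a / 2%:R) n * poch (- (1 / 4%:R)) n)
      / (poch e n * poch (a + n%:R) n) * dougall_harm_value a c n.
Proof.
have := fact_neq0 natr_neq0 n; have := poch_e_neq0 a c e_natr_neq0 n.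
have := poch_an_neq0 n n.
move=> ? ? ?; rewrite /theorem4_rhs.
have -> : 4%:R ^ (n%:Z - 1) = 4%:R ^+ n / 4%:R :> F by rewrite expfzDr.
rewrite harm_sub_dixon harm_sub_dougall mul2n -addnn natrD addrA !gbinom_poch.
rewrite (_ : x / 2%:R - 1 / 4%:R + 1 = (1 + a) / 2%:R); last by field; neq0_by_context.
rewrite (_ : - (3%:R / 4%:R) + 1 = 1 / 4%:R :> F); last by field; neq0_by_context.
rewrite (_ : (x - 1) / 2%:R + 1 = e); last by field; neq0_by_context.
rewrite (_ : x - 1 / 2%:R + n%:R + 1 = a + n%:R); last by field; neq0_by_context.
rewrite (_ : x / 2%:R - 3%:R / 4%:R + 1 = a / 2%:R); last by field; neq0_by_context.
rewrite (_ : - (5%:R / 4%:R) + 1 = - (1 / 4%:R) :> F); last by field; neq0_by_context.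
by field; neq0_by_context.
Qed.

Lemma dixon_duplication n :
  (a + 2%:R * n%:R) * poch (1 + a) n * poch (a + n%:R) n
  = (a + n%:R) * 4%:R ^+ n * poch ((1 + a) / 2%:R) n * poch (1 + a / 2%:R) n.
Proof.
have shift : (a + 2%:R * n%:R) * poch (a + n%:R) n = (a + n%:R) * poch (1 + a + n%:R) n.
  by rewrite (_ : 1 + a + n%:R = a + n%:R + 1) -?pochSl ?pochS; ring.
transitivity (poch (1 + a) n * ((a + 2%:R * n%:R) * poch (a + n%:R) n)); first by ring.
rewrite shift mulrCA poch_double_split // (_ : (1 + a + 1) / 2%:R = 1 + a / 2%:R); first by ring.
by field; neq0_by_context.
Qed.

Lemma dougall_duplication n :
  a * poch (1 + a) n * poch (a + n%:R) n
  = (a + n%:R) * 4%:R ^+ n * poch (a / 2%:R) n * poch ((1 + a) / 2%:R) n.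
Proof.
rewrite (addrC 1 a) -pochSl pochS.
transitivity ((a + n%:R) * (poch a n * poch (a + n%:R) n)); first by ring.
by rewrite poch_double_split //; ring.
Qed.

Theorem theorem4_generic n : theorem4_lhs n x = theorem4_rhs n x.
Proof.
have := poch_e_neq0 a c e_natr_neq0 n; have := poch_an_neq0 n n.
have := poch_half_a_neq0 a natr_neq0 a_natr_neq0 n.
have := poch_half_a1_neq0 a natr_neq0 a_natr_neq0 n.
have := a_natr_neq0 n; have := a_natr_neq0 (2 * n); have := a_neq0 a a_natr_neq0.
move=> ? ? ? ? ? ? ?.
rewrite theorem4_lhs_closed theorem4_rhs_closed /dixon_value /dougall_value.
rewrite (_ : 1 + a / 2%:R - c = 1 / 4%:R); last by field; neq0_by_context.
rewrite (_ : (1 + a) / 2%:R - c = - (1 / 4%:R)); last by field; neq0_by_context.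
rewrite mulrDl; congr (_ + _).
  have -> : poch (1 + a) n = (a + n%:R) * 4%:R ^+ n * poch ((1 + a) / 2%:R) n
                             * poch (1 + a / 2%:R) n / ((a + 2%:R * n%:R) * poch (a + n%:R) n).
    by rewrite -dixon_duplication; field; neq0_by_context.
  by field; neq0_by_context.
have -> : poch (1 + a) n = (a + n%:R) * 4%:R ^+ n * poch (a / 2%:R) n
                           * poch ((1 + a) / 2%:R) n / (a * poch (a + n%:R) n).
  by rewrite -dougall_duplication; field; neq0_by_context.
by field; neq0_by_context.
Qed.

End Theorem4.

Local Notation "x %:F" := (tofrac x) (format "x %:F").

Section Evaluation.
Context {C : fieldType}.
Variable x0 : C.
Local Notation K := {fraction {poly C}}.

Definition evaluates_at (u : K) (v : C) := exists p q : {poly C},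
  [/\ q.[x0] != 0, u = p%:F / q%:F & v = p.[x0] / q.[x0]].

Lemma tofrac_horner_neq0 (q : {poly C}) : q.[x0] != 0 -> q%:F != 0 :> K.
Proof. by move=> q_neq0; rewrite tofrac_eq0; apply: contraNneq q_neq0 => ->; rewrite horner0. Qed.

Lemma evaluates_poly p : evaluates_at p%:F p.[x0].
Proof. by exists p, 1; rewrite hornerC oner_neq0 tofrac1 !divr1. Qed.

Lemma evaluates_X : evaluates_at 'X%:F x0.
Proof. by rewrite -[x0]hornerX; apply: evaluates_poly. Qed.

Lemma evaluates_nat m : evaluates_at m%:R m%:R.
Proof. by have := evaluates_poly m%:R; rewrite rmorph_nat -polyC_natr hornerC. Qed.

Lemma evaluates_1 : evaluates_at 1 1.
Proof. exact: evaluates_nat 1. Qed.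

Lemma evaluates_add u1 v1 u2 v2 :
  evaluates_at u1 v1 -> evaluates_at u2 v2 -> evaluates_at (u1 + u2) (v1 + v2).
Proof.
move=> [p1 [q1 [q1_neq0 -> ->]]] [p2 [q2 [q2_neq0 -> ->]]].
exists (p1 * q2 + p2 * q1), (q1 * q2); split.
- by rewrite hornerM mulf_neq0.
- by rewrite tofracD !tofracM addf_div ?tofrac_horner_neq0.
- by rewrite hornerD !hornerM addf_div.
Qed.

Lemma evaluates_mul u1 v1 u2 v2 :
  evaluates_at u1 v1 -> evaluates_at u2 v2 -> evaluates_at (u1 * u2) (v1 * v2).
Proof.
move=> [p1 [q1 [q1_neq0 -> ->]]] [p2 [q2 [q2_neq0 -> ->]]].
by exists (p1 * p2), (q1 * q2); rewrite !hornerM mulf_neq0 // !tofracM !mulf_div.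
Qed.

Lemma evaluates_opp u v : evaluates_at u v -> evaluates_at (- u) (- v).
Proof.
by move=> [p [q [q_neq0 -> ->]]]; exists (- p), q; rewrite tofracN hornerN !mulNr.
Qed.

Lemma evaluates_inv u v : evaluates_at u v -> v != 0 -> evaluates_at u^-1 v^-1.
Proof.
move=> [p [q [q_neq0 -> ->]]]; rewrite mulf_eq0 invr_eq0 negb_or => /andP[p_neq0 _].
by exists q, p; rewrite !invf_div.
Qed.

Lemma evaluates_uniq u v1 v2 : evaluates_at u v1 -> evaluates_at u v2 -> v1 = v2.
Proof.
move=> [p1 [q1 [q1_neq0 -> ->]]] [p2 [q2 [q2_neq0 /eqP + ->]]].
rewrite eqr_div ?tofrac_horner_neq0 // -!tofracM tofrac_eq => /eqP E.
by apply/eqP; rewrite eqr_div // -!hornerM E.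
Qed.

Lemma evaluates_exprn u v m : evaluates_at u v -> evaluates_at (u ^+ m) (v ^+ m).
Proof.
move=> uv; elim: m => [|m IH]; first exact: evaluates_1.
by rewrite !exprS; apply: evaluates_mul.
Qed.

Lemma evaluates_exprz u v (z : int) :
  evaluates_at u v -> v != 0 -> evaluates_at (u ^ z) (v ^ z).
Proof.
move=> uv v_neq0; case: z => m /=; first exact: evaluates_exprn.
by apply: evaluates_inv; [apply: evaluates_exprn | rewrite expf_neq0].
Qed.

Lemma evaluates_sum (I : Type) (r : seq I) (P : pred I) (f : I -> K) (g : I -> C) :
  (forall i, P i -> evaluates_at (f i) (g i)) ->
  evaluates_at (\sum_(i <- r | P i) f i) (\sum_(i <- r | P i) g i).
Proof. by apply: big_ind2 => //; [exact: evaluates_nat 0 | exact: evaluates_add]. Qed.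

Lemma evaluates_prod (I : Type) (r : seq I) (P : pred I) (f : I -> K) (g : I -> C) :
  (forall i, P i -> evaluates_at (f i) (g i)) ->
  evaluates_at (\prod_(i <- r | P i) f i) (\prod_(i <- r | P i) g i).
Proof. by apply: big_ind2 => //; [exact: evaluates_1 | exact: evaluates_mul]. Qed.

Lemma evaluates_gbinom u v k : (k`!)%:R != 0 :> C ->
  evaluates_at u v -> evaluates_at (gbinom u k) (gbinom v k).
Proof.
move=> fact_neq0 uv; apply: evaluates_mul.
  by apply: evaluates_prod => i _; apply: evaluates_add => //; apply/evaluates_opp/evaluates_nat.
exact/evaluates_inv/fact_neq0/evaluates_nat.
Qed.

Lemma evaluates_harm m u v : (forall j, (1 <= j <= m)%N -> v + j%:R != 0) ->
  evaluates_at u v -> evaluates_at (harm m u) (harm m v).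
Proof.
move=> v_neq0 uv; rewrite /harm big_nat_cond [X in evaluates_at _ X]big_nat_cond.
apply: evaluates_sum => j /andP[/v_neq0 vj_neq0 _].
exact/evaluates_inv/vj_neq0/evaluates_add/evaluates_nat.
Qed.

End Evaluation.

Ltac evaluates_tac :=
  repeat first
    [ apply: evaluates_X | apply: evaluates_1 | apply: evaluates_nat
    | apply: evaluates_gbinom | apply: evaluates_harm | apply: evaluates_exprn
    | apply: evaluates_exprz | apply: evaluates_add | apply: evaluates_mul
    | apply: evaluates_opp | apply: evaluates_inv ].

Section Complex.
Context {C : numFieldType}.
Local Notation K := {fraction {poly C}}.

Lemma fraction_natr_neq0 m : m.+1%:R != 0 :> K.
Proof. by rewrite -(rmorph_nat (@tofrac _)) tofrac_eq0 -polyC_natr polyC_eq0 pnatr_eq0. Qed.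

Lemma fraction_twice_X_neq0 m : 2%:R * ('X%:F + 1 / 2%:R) + m%:R != 0 :> K.
Proof.
have -> : 2%:R * ('X%:F + 1 / 2%:R) + m%:R = (2%:R * 'X + m.+1%:R)%:F :> K.
  rewrite rmorphD rmorphM !rmorph_nat /= -natr1.
  by field; rewrite fraction_natr_neq0.
apply: (tofrac_horner_neq0 0).
by rewrite hornerD hornerM hornerX mulr0 add0r -polyC_natr hornerC pnatr_eq0.
Qed.

Lemma quarter_natr_neq0 (r j : nat) : ~~ (4 %| r)%N -> - (r%:R / 4%:R) + j%:R != 0 :> C.
Proof.
move=> r_ndvd; have -> : - (r%:R / 4%:R) + j%:R = ((4 * j)%:R - r%:R) / 4%:R :> C.
  by rewrite natrM; field.
rewrite mulf_neq0 ?invr_eq0 ?pnatr_eq0 // subr_eq0 eqr_nat.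
by apply: contraNneq r_ndvd => <-; apply: dvdn_mulr.
Qed.

Lemma theorem4_lhs_evaluates n (x : C)
  (h1 : forall k, (k <= n)%N -> gbinom ((x - 1) / 2%:R + k%:R) k != 0)
  (h2 : forall k, (k <= n)%N -> gbinom (x - 1 / 2%:R + n%:R + k%:R) k != 0)
  (h5 : forall j, (1 <= j <= 2 * n)%N -> x + j%:R != 0) :
  evaluates_at x (theorem4_lhs n 'X%:F) (theorem4_lhs n x).
Proof.
rewrite /theorem4_lhs big_nat_cond [X in evaluates_at _ _ X]big_nat_cond.
apply: evaluates_sum => k /andP[/andP[_ le_kn] _].
evaluates_tac; rewrite ?pnatr_eq0 -?lt0n ?fact_gt0 //.
  by rewrite mulf_neq0 ?h1 ?h2.
move=> j /andP[j_gt0 le_j2k]; apply: h5.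
by rewrite j_gt0 (leq_trans le_j2k) // leq_mul2l.
Qed.

Lemma theorem4_rhs_evaluates n (x : C)
  (h3 : gbinom ((x - 1) / 2%:R + n%:R) n != 0)
  (h4 : gbinom (x - 1 / 2%:R + (2 * n)%:R) n != 0)
  (h6 : forall j, (1 <= j <= n)%N -> (x - 1) / 2%:R + j%:R != 0) :
  evaluates_at x (theorem4_rhs n 'X%:F) (theorem4_rhs n x).
Proof.
rewrite /theorem4_rhs; evaluates_tac; rewrite ?pnatr_eq0 -?lt0n ?fact_gt0 //.
- by rewrite mulf_neq0.
- by move=> j _; apply: quarter_natr_neq0.
- by rewrite mulf_neq0.
- by move=> j _; apply: quarter_natr_neq0.
Qed.

End Complex.

Local Open Scope complex_scope.

Theorem theorem4 (R : realType) (n : nat) (x : R[i])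
  (* no denominator vanishes *)
  (h1 : forall k, (k <= n)%N -> gbinom ((x - 1) / 2%:R + k%:R) k != 0)
  (h2 : forall k, (k <= n)%N -> gbinom (x - 1 / 2%:R + n%:R + k%:R) k != 0)
  (h3 : gbinom ((x - 1) / 2%:R + n%:R) n != 0)
  (h4 : gbinom (x - 1 / 2%:R + (2 * n)%:R) n != 0)
  (h5 : forall j, (1 <= j <= 2 * n)%N -> x + j%:R != 0)
  (h6 : forall j, (1 <= j <= n)%N -> (x - 1) / 2%:R + j%:R != 0) :
  \sum_(0 <= k < n.+1)
     (-1) ^+ k * (('C(n, k))%:R : R[i])
     * (gbinom (x / 2%:R + k%:R) k * gbinom (x - 1 / 2%:R + k%:R) k)
     / (gbinom ((x - 1) / 2%:R + k%:R) k * gbinom (x - 1 / 2%:R + n%:R + k%:R) k)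
     * harm (2 * k) x
  = (4%:R : R[i]) ^ (n%:Z - 1)
     * (gbinom (x / 2%:R - 1 / 4%:R + n%:R) n * gbinom (- (3%:R / 4%:R) + n%:R) n)
     / (gbinom ((x - 1) / 2%:R + n%:R) n * gbinom (x - 1 / 2%:R + (2 * n)%:R) n)
     * (harm n ((x - 1) / 2%:R) - harm n (- (3%:R / 4%:R)))
  + (4%:R : R[i]) ^ (n%:Z - 1)
     * (gbinom (x / 2%:R - 3%:R / 4%:R + n%:R) n * gbinom (- (5%:R / 4%:R) + n%:R) n)
     / (gbinom ((x - 1) / 2%:R + n%:R) n * gbinom (x - 1 / 2%:R + (2 * n)%:R) n)
     * (harm n ((x - 1) / 2%:R) - harm n (- (5%:R / 4%:R))).
Proof.
have generic := theorem4_generic _ (@fraction_natr_neq0 R[i]) (@fraction_twice_X_neq0 R[i]) n.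
rewrite addrK in generic.
change (theorem4_lhs n x = theorem4_rhs n x).
have := theorem4_lhs_evaluates _ _ h1 h2 h5; rewrite generic => eval_lhs.
exact: evaluates_uniq eval_lhs (theorem4_rhs_evaluates _ _ h3 h4 h6).
Qed.
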